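(* Let $\mathscr{H}$ be a complex Hilbert space, let $T\in\mathbb{B}(\mathscr{H})$ be invertible, and let $T=U|T|$ be its polar decomposition (so $U$ is unitary). Suppose the spectrum $\mathrm{sp}(U)$ is contained in some open semicircle, i.e. $\mathrm{sp}(U)\subseteq\{e^{i\lambda}:\alpha<\lambda<\alpha+\pi\}$ for some real $\alpha$. Then the Aluthge transform $\widetilde{T}=|T|^{1/2}U|T|^{1/2}$ is normal if and only if $T$ is normal.
   Context: $\mathbb{B}(\mathscr{H})$ denotes the algebra of bounded linear operators on $\mathscr{H}$. For $T\in\mathbb{B}(\mathscr{H})$, $|T|=(T^\ast T)^{1/2}$. The polar decomposition $T=U|T|$ means $U$ is a partial isometry with $\ker U=\ker|T|$ and $U^\ast U$ the projection onto $\overline{\mathrm{ran}(|T|)}$; for invertible $T$, $U$ is unitary and $|T|$ is invertible. The Aluthge transform of $T$ is $\widetilde{T}:=|T|^{1/2}U|T|^{1/2}$. *)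

From mathcomp Require Import all_boot all_algebra.
From mathcomp Require Import reals trigo complex.
Import GRing.Theory Num.Theory.
Local Open Scope ring_scope.
Local Open Scope complex_scope.

Set Implicit Arguments.
Unset Strict Implicit.
Unset Printing Implicit Defensive.

Section HilbertDefs.
Variables (R : realType) (H : lmodType R[i]) (ip : H -> H -> R[i]).

Definition cnorm (x : H) : R := Num.sqrt (complex.Re (ip x x)).

Definition is_complex_hilbert : Prop :=
  [/\ (forall (a : R[i]) (x y z : H), ip (a *: x + y) z = a * ip x z + ip y z),
      (forall x y : H, ip y x = (ip x y)^*),
      (forall x : H, 0 <= ip x x),
      (forall x : H, ip x x = 0 -> x = 0) &
      (forall u : nat -> H,
         (forall e : R, 0 < e -> exists N : nat, forall m n : nat,
             (N <= m)%N -> (N <= n)%N -> cnorm (u m - u n) < e) ->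
         exists l : H, forall e : R, 0 < e -> exists N : nat, forall n : nat,
             (N <= n)%N -> cnorm (u n - l) < e)].

Definition is_bounded_op (T : H -> H) : Prop :=
  (forall (a : R[i]) (x y : H), T (a *: x + y) = a *: T x + T y) /\
  exists M : R, forall x : H, cnorm (T x) <= M * cnorm x.

Definition is_adjoint (T Ts : H -> H) : Prop :=
  forall x y : H, ip (T x) y = ip x (Ts y).

Definition op_invertible (T : H -> H) : Prop :=
  exists S : H -> H, [/\ is_bounded_op S, (forall x, S (T x) = x) &
                        (forall x, T (S x) = x)].

Definition is_positive_op (P : H -> H) : Prop :=
  is_bounded_op P /\ forall x : H, 0 <= ip (P x) x.

Definition is_unitary_op (U : H -> H) : Prop :=
  is_bounded_op U /\
  exists Us : H -> H, [/\ is_adjoint U Us, (forall x, Us (U x) = x) &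
                         (forall x, U (Us x) = x)].

Definition is_normal_op (N : H -> H) : Prop :=
  exists Ns : H -> H, is_adjoint N Ns /\ forall x, N (Ns x) = Ns (N x).

Definition spectrum (T : H -> H) (lam : R[i]) : Prop :=
  ~ op_invertible (fun x => T x - lam *: x).

Definition is_pos_sqrt (P Q : H -> H) : Prop :=
  is_positive_op Q /\ forall x, Q (Q x) = P x.

Definition is_op_abs (T A : H -> H) : Prop :=
  exists Ts : H -> H, is_adjoint T Ts /\ is_pos_sqrt (fun x => Ts (T x)) A.

(* Aluthge transform |T|^{1/2} U |T|^{1/2}, given S = |T|^{1/2} *)
Definition aluthge (S U : H -> H) : H -> H := fun x => S (U (S x)).

End HilbertDefs.

(* Backward direction: if [T = U A] is normal then [U] commutes with [A^2 = T^* T], hence with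
   [A] and with [S = A^(1/2)], so the Aluthge transform [S U S] is [T] itself.
   Forward direction: normality of [S U S] together with injectivity and surjectivity of
   [S] gives [U A U^* = U^* A U], i.e. [A] commutes with [U^2].  Rotating the spectrum,
   [V = w U] has spectrum in the open right half plane, so its numerical range lies in a
   half plane [Re z >= c > 0]; then [B = V + V^*] is positive and invertible.  [A] commutes
   with [B^2 = V^2 + V^*2 + 2], hence with [B], and with [B (V - V^* ) = V^2 - V^*2], hence
   with [V - V^*]; so [A] commutes with [V] and [U], and [T = U A] is normal.
   Commutation with square roots is proved without functional calculus: if [X] commutes
   with [B^2], then [Y = X B - B X] anticommutes with [B], so [2 Y = C Y + Y C] for the
   strict contraction [C = 1 - B / L], which forces [Y = 0]. *)

From mathcomp Require Import all_boot all_order all_algebra.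
From mathcomp Require Import reals trigo complex.
From mathcomp Require Import classical_sets topology normedtype sequences.
From mathcomp Require Import ring lra.
From Stdlib Require Import Classical.
Import Order.TTheory GRing.Theory Num.Theory numFieldNormedType.Exports.
Local Open Scope ring_scope.
Local Open Scope complex_scope.

Set Implicit Arguments.
Unset Strict Implicit.
Unset Printing Implicit Defensive.

Local Notation Re := complex.Re.
Local Notation Im := complex.Im.

Section Geometric.
Local Open Scope classical_set_scope.

Lemma geometric_eq0 (R : realType) (a b p : R) :
  0 <= a -> 0 <= p < 1 -> (forall n, a <= p ^+ n * b) -> a = 0.
Proof.
move=> a_ge0 /andP[p_ge0 p_lt1] le_ab; apply/eqP; rewrite eq_le a_ge0 andbT.
have : (fun n : nat => p ^+ n * b) @ \oo --> 0 * b.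
  by apply: cvgMr_tmp; apply: cvg_expr; rewrite ger0_norm.
rewrite mul0r => pb0.
by apply: (ler_cvg_to (cvg_cst a) pb0); apply: nearW.
Qed.

End Geometric.

(** * Inner product spaces *)

Section InnerProduct.
Variables (R : realType) (H : lmodType R[i]) (ip : H -> H -> R[i]).
Hypothesis ipDZl : forall (a : R[i]) (x y z : H), ip (a *: x + y) z = a * ip x z + ip y z.
Hypothesis ip_conj : forall x y : H, ip y x = (ip x y)^*.
Hypothesis ip_ge0 : forall x : H, 0 <= ip x x.
Hypothesis ip_eq0 : forall x : H, ip x x = 0 -> x = 0.

Definition normsq (x : H) : R := Re (ip x x).

Lemma ip0l z : ip 0 z = 0.
Proof. by have := ipDZl (-1) 0 0 z; rewrite scaler0 addr0 mulN1r addNr. Qed.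

Lemma ipDl x y z : ip (x + y) z = ip x z + ip y z.
Proof. by rewrite -[x in LHS]scale1r ipDZl mul1r. Qed.

Lemma ipZl a x z : ip (a *: x) z = a * ip x z.
Proof. by rewrite -[a *: x]addr0 ipDZl ip0l addr0. Qed.

Lemma ipNl x z : ip (- x) z = - ip x z.
Proof. by rewrite -scaleN1r ipZl mulN1r. Qed.

Lemma ipBl x y z : ip (x - y) z = ip x z - ip y z.
Proof. by rewrite ipDl ipNl. Qed.

Lemma ip0r z : ip z 0 = 0.
Proof. by rewrite ip_conj ip0l conjc0. Qed.

Lemma ipDr x y z : ip z (x + y) = ip z x + ip z y.
Proof. by rewrite ip_conj ipDl rmorphD /= -!ip_conj. Qed.

Lemma ipZr a x z : ip z (a *: x) = a^* * ip z x.
Proof. by rewrite ip_conj ipZl rmorphM /= -ip_conj. Qed.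

Lemma ipNr x z : ip z (- x) = - ip z x.
Proof. by rewrite ip_conj ipNl rmorphN /= -ip_conj. Qed.

Lemma ipBr x y z : ip z (x - y) = ip z x - ip z y.
Proof. by rewrite ip_conj ipBl rmorphB /= -!ip_conj. Qed.

Lemma Re_ipC x y : Re (ip y x) = Re (ip x y).
Proof. by rewrite ip_conj; case: (ip x y). Qed.

Lemma ip_normsq x : ip x x = (normsq x)%:C.
Proof. by have := ger0_Im (ip_ge0 x); rewrite /normsq; case: (ip x x) => a b /= ->. Qed.

Lemma normsq_ge0 x : 0 <= normsq x.
Proof. by have := ip_ge0 x; rewrite lecE => /andP[]. Qed.

Lemma normsq_eq0 x : normsq x = 0 -> x = 0.
Proof. by move=> nx0; apply: ip_eq0; rewrite ip_normsq nx0. Qed.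

Lemma normsq0 : normsq 0 = 0.
Proof. by rewrite /normsq ip0l. Qed.

Lemma ip_injr x y : (forall z, ip z x = ip z y) -> x = y.
Proof.
by move=> eq_xy; apply/eqP; rewrite -subr_eq0; apply/eqP/ip_eq0; rewrite ipBr eq_xy subrr.
Qed.

Lemma normsqD x y : normsq (x + y) = normsq x + normsq y + 2 * Re (ip x y).
Proof. by rewrite /normsq ipDl !ipDr !raddfD /= (Re_ipC x y); ring. Qed.

Lemma normsqB x y : normsq (x - y) = normsq x + normsq y - 2 * Re (ip x y).
Proof. by rewrite /normsq ipBl !ipBr !raddfB /= (Re_ipC x y); ring. Qed.

Lemma normsqN x : normsq (- x) = normsq x.
Proof. by rewrite /normsq ipNl ipNr opprK. Qed.

Lemma normsqZ a x : normsq (a *: x) = Re (a * a^*) * normsq x.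
Proof. by rewrite /normsq ipZl ipZr mulrA ip_normsq; case: (a * a^*) => u v /=; ring. Qed.

Lemma normsqZ_unit a x : a * a^* = 1 -> normsq (a *: x) = normsq x.
Proof. by move=> aa1; rewrite normsqZ aa1 mul1r. Qed.

Lemma normsqZ_real (r : R) x : normsq (r%:C *: x) = r ^+ 2 * normsq x.
Proof. by rewrite normsqZ /=; congr (_ * _); ring. Qed.

Lemma Re_ip_le x y : 2 * Re (ip x y) <= normsq x + normsq y.
Proof. by have := normsq_ge0 (x - y); rewrite normsqB; lra. Qed.

Lemma Re_ip_ge x y : - (normsq x + normsq y) <= 2 * Re (ip x y).
Proof. by have := normsq_ge0 (x + y); rewrite normsqD; lra. Qed.

Lemma normsqD_le x y : normsq (x + y) <= 2 * (normsq x + normsq y).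
Proof. by have := Re_ip_le x y; rewrite normsqD; lra. Qed.

Lemma Re_ipZl_real (r : R) x y : Re (ip (r%:C *: x) y) = r * Re (ip x y).
Proof. by rewrite ipZl; case: (ip x y) => u v /=; ring. Qed.

Lemma Re_ipZr_real (r : R) x y : Re (ip x (r%:C *: y)) = r * Re (ip x y).
Proof. by rewrite ipZr; case: (ip x y) => u v /=; ring. Qed.

Section LinearMap.
Variable F : H -> H.
Hypothesis F_lin : linear F.

Lemma linf0 : F 0 = 0.
Proof. by have := F_lin (-1) 0 0; rewrite scaler0 addr0 scaleN1r addNr. Qed.

Lemma linfD x y : F (x + y) = F x + F y.
Proof. by rewrite -[x in LHS]scale1r F_lin scale1r. Qed.

Lemma linfZ a x : F (a *: x) = a *: F x.
Proof. by rewrite -[a *: x]addr0 F_lin linf0 addr0. Qed.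

Lemma linfN x : F (- x) = - F x.
Proof. by rewrite -scaleN1r linfZ scaleN1r. Qed.

Lemma linfB x y : F (x - y) = F x - F y.
Proof. by rewrite linfD linfN. Qed.

End LinearMap.

Lemma linear_add (F G : H -> H) : linear F -> linear G -> linear (fun x => F x + G x).
Proof. by move=> F_lin G_lin a x y; rewrite F_lin G_lin scalerDr addrACA. Qed.

Lemma linear_sub (F G : H -> H) : linear F -> linear G -> linear (fun x => F x - G x).
Proof. by move=> F_lin G_lin a x y; rewrite F_lin G_lin scalerBr opprD addrACA. Qed.

Lemma linear_comp (F G : H -> H) : linear F -> linear G -> linear (fun x => F (G x)).
Proof. by move=> F_lin G_lin a x y; rewrite G_lin F_lin. Qed.

Definition op_bounded (F : H -> H) :=
  exists K : R, 0 < K /\ forall x, normsq (F x) <= K * normsq x.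

Definition bounded_below (F : H -> H) :=
  exists K : R, 0 < K /\ forall x, normsq x <= K * normsq (F x).

Lemma bounded_opP F : is_bounded_op ip F -> linear F /\ op_bounded F.
Proof.
case=> F_lin [M leM]; split=> //; exists (M ^+ 2 + 1); split; first by nra.
move=> x; have := leM x; rewrite /cnorm -/(normsq _) -/(normsq _).
have := sqr_sqrtr (normsq_ge0 (F x)); have := sqr_sqrtr (normsq_ge0 x).
have := sqrtr_ge0 (normsq (F x)); have := sqrtr_ge0 (normsq x).
set a := Num.sqrt _; set b := Num.sqrt _ => b_ge0 a_ge0 <- <- le_ab.
by nra.
Qed.

Lemma isometry_bounded V : (forall x, normsq (V x) = normsq x) -> op_bounded V.
Proof. by move=> V_iso; exists 1; split=> // x; rewrite V_iso mul1r. Qed.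

Lemma bounded_add (F G : H -> H) :
  op_bounded F -> op_bounded G -> op_bounded (fun x => F x + G x).
Proof.
move=> [KF [KF_gt0 leF]] [KG [KG_gt0 leG]]; exists (2 * (KF + KG)); split; first lra.
move=> x; have := normsqD_le (F x) (G x); have := leF x; have := leG x.
by have := normsq_ge0 x; nra.
Qed.

Lemma bounded_sub (F G : H -> H) :
  op_bounded F -> op_bounded G -> op_bounded (fun x => F x - G x).
Proof.
move=> bF [KG [KG_gt0 leG]]; apply: bounded_add bF _.
by exists KG; split=> // x; rewrite normsqN.
Qed.

Lemma bounded_comp (F G : H -> H) :
  op_bounded F -> op_bounded G -> op_bounded (fun x => F (G x)).
Proof.
move=> [KF [KF_gt0 leF]] [KG [KG_gt0 leG]]; exists (KF * KG); split; first exact: mulr_gt0.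
move=> x; have := leF (G x); have := leG x; have := normsq_ge0 (G x).
by have := normsq_ge0 x; nra.
Qed.

Lemma invertible_bounded_below F : op_invertible ip F -> bounded_below F.
Proof.
case=> G [/bounded_opP[_ [K [K_gt0 leG]]] GF _]; exists K; split=> // x.
by have := leG (F x); rewrite GF.
Qed.

(** * Positive operators *)

Definition psd (P : H -> H) := linear P /\ forall x, 0 <= ip (P x) x.

Definition coercive (P : H -> H) :=
  exists c : R, 0 < c /\ forall x, c * normsq x <= Re (ip (P x) x).

Lemma positive_psd P : is_positive_op ip P -> psd P /\ op_bounded P.
Proof. by case=> /bounded_opP[P_lin P_bnd] P_ge0. Qed.

Section PositiveOperator.
Variable P : H -> H.
Hypothesis P_psd : psd P.

Lemma psd_Im_eq0 x : Im (ip (P x) x) = 0.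
Proof. by have := ger0_Im (P_psd.2 x). Qed.

Lemma psd_Re_ge0 x : 0 <= Re (ip (P x) x).
Proof. by case: P_psd => _ /(_ x); rewrite lecE => /andP[]. Qed.

(* Polarization: the imaginary parts of <P(x + y), x + y> and <P(x + iy), x + iy> vanish. *)
Lemma psd_selfadj : is_adjoint ip P P.
Proof.
move=> x y; have [P_lin _] := P_psd.
have ii : 'i * 'i^* = 1 :> R[i] by simpc.
have := psd_Im_eq0 (x + y); have := psd_Im_eq0 (x + 'i *: y).
rewrite !(linfD P_lin) (linfZ P_lin) !ipDl !ipDr !ipZl !ipZr mulrA ii mul1r !raddfD /=.
rewrite !psd_Im_eq0 [ip x (P y)]ip_conj.
case: (ip (P x) y) => a b; case: (ip (P y) x) => c d /= e1 e2.
by apply/eqP; rewrite eq_complex /=; apply/andP; split; apply/eqP; lra.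
Qed.

Lemma psd_normsq_le (L : R) : 0 < L ->
  (forall u, Re (ip (P u) u) <= L * normsq u) ->
  forall x, normsq (P x) <= L * Re (ip (P x) x).
Proof.
move=> L_gt0 leL x; have [P_lin _] := P_psd.
have LVL : L^-1 * L = 1 by rewrite mulVf ?gt_eqF.
have LV_gt0 : 0 < L^-1 by rewrite invr_gt0.
(* Expand [0 <= <P y, y>] at [y = x - L^-1 P x]. *)
have := psd_Re_ge0 (x - (L^-1)%:C *: P x).
rewrite (linfB P_lin) (linfZ P_lin) ipBl !ipBr !raddfB /= !Re_ipZl_real !Re_ipZr_real.
rewrite (psd_selfadj (P x) x) -/(normsq (P x)).
have le_b := ler_wpM2l (ltW LV_gt0) (leL (P x)); rewrite mulrA LVL mul1r in le_b.
move: le_b; set b := Re _; set n := normsq _; set a := Re _ => le_b ge0.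
have : 0 <= a - L^-1 * n by nra.
by move/(ler_wpM2l (ltW L_gt0)); rewrite mulr0 mulrBr mulrA mulfV ?gt_eqF // mul1r subr_ge0.
Qed.

Lemma psd_numrange_le : op_bounded P ->
  exists L, 0 < L /\ forall u, Re (ip (P u) u) <= L * normsq u.
Proof.
move=> [K [K_gt0 leK]]; exists ((K + 1) / 2); split; first lra.
by move=> u; have := Re_ip_le (P u) u; have := leK u; lra.
Qed.

Lemma psd_bounded_normsq_le : op_bounded P ->
  exists L, 0 < L /\ forall x, normsq (P x) <= L * Re (ip (P x) x).
Proof.
move=> /psd_numrange_le[L [L_gt0 leL]].
by exists L; split=> //; apply: psd_normsq_le.
Qed.

Lemma psd_coercive : op_bounded P -> bounded_below P -> coercive P.
Proof.
move=> /psd_bounded_normsq_le[L [L_gt0 leL]] [K [K_gt0 leK]].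
have KL_gt0 : 0 < K * L by apply: mulr_gt0.
exists (K * L)^-1; split; first by rewrite invr_gt0.
move=> x; rewrite ler_pdivrMl //; have := ler_wpM2l (ltW K_gt0) (leL x).
by have := leK x; rewrite mulrA; lra.
Qed.

End PositiveOperator.

Lemma coercive_inj P : linear P -> coercive P -> injective P.
Proof.
move=> P_lin [c [c_gt0 leP]] x y Pxy; apply/eqP; rewrite -subr_eq0; apply/eqP.
apply: normsq_eq0; have := leP (x - y); rewrite (linfB P_lin) Pxy subrr ip0l /=.
by have := normsq_ge0 (x - y); nra.
Qed.

(* [|x - B x / L|^2 <= (1 - c / L) |x|^2], and [L / (L + c)] is a nonnegative upper bound
   for [1 - c / L]. *)
Lemma coercive_contraction B : psd B -> op_bounded B -> coercive B ->
  exists k q : R, 0 <= q < 1 /\ forall x, normsq (x - k%:C *: B x) <= q * normsq x.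
Proof.
move=> B_psd B_bnd [c [c_gt0 leB]]; have [B_lin _] := B_psd.
have [L [L_gt0 leL]] := psd_bounded_normsq_le B_psd B_bnd.
have LV_gt0 : 0 < L^-1 by rewrite invr_gt0.
have Lc_gt0 : 0 < L + c by lra.
exists L^-1, (L / (L + c)); split.
  by rewrite divr_ge0 ?ltW //= ltr_pdivrMr // mul1r; lra.
move=> x; rewrite normsqB normsqZ_real Re_ipZr_real Re_ipC.
have := leL x; have := leB x; have := normsq_ge0 x; have := normsq_ge0 (B x).
set a := Re _; set n := normsq (B x); set m := normsq x => n_ge0 m_ge0 ca le_n.
have LVL : L^-1 * L = 1 by rewrite mulVf ?gt_eqF.
have le_q : 1 - L^-1 * c <= L / (L + c).
  rewrite ler_pdivlMr // -subr_ge0.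
  have -> : L - (1 - L^-1 * c) * (L + c) = L^-1 * (c * c) by field; rewrite gt_eqF.
  by apply: mulr_ge0; [apply: ltW|nra].
have : L^-1 ^+ 2 * n <= L^-1 * a.
  by rewrite expr2 -mulrA ler_pM2l // -[a]mul1r -LVL -mulrA ler_pM2l.
have := ler_wpM2l (ltW LV_gt0) ca; have := ler_wpM2r m_ge0 le_q.
by nra.
Qed.

Lemma op_eq0_of_contraction_average C Y (q : R) : 0 <= q < 1 ->
  (forall x, normsq (C x) <= q * normsq x) -> op_bounded Y ->
  (forall x, Y x + Y x = C (Y x) + Y (C x)) -> forall x, Y x = 0.
Proof.
move=> q01 leC [K [K_gt0 leY]] Y_avg x; apply: normsq_eq0.
have q_ge0 : 0 <= q by case/andP: q01.
apply: (@geometric_eq0 _ _ (K * normsq x) q (normsq_ge0 _) q01) => n.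
elim: n x => [|n IH] x; first by rewrite expr0 mul1r.
have qnK_ge0 : 0 <= q ^+ n * K by apply: mulr_ge0; [apply: exprn_ge0 | apply: ltW].
have := normsqD_le (C (Y x)) (Y (C x)); rewrite -Y_avg normsqD.
have := leC (Y x); have := IH (C x).
have := ler_wpM2l q_ge0 (IH x); have := ler_wpM2l qnK_ge0 (leC x).
by rewrite exprS /normsq; lra.
Qed.

Lemma commute_sqrt B X : psd B -> op_bounded B -> coercive B ->
  linear X -> op_bounded X -> (forall x, X (B (B x)) = B (B (X x))) ->
  forall x, X (B x) = B (X x).
Proof.
move=> B_psd B_bnd B_coer X_lin X_bnd XBB; have [B_lin _] := B_psd.
have [k [q [q01 leC]]] := coercive_contraction B_psd B_bnd B_coer.
pose Y x := X (B x) - B (X x).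
have Y_lin : linear Y by apply: linear_sub; apply: linear_comp.
have YB x : Y (B x) = - B (Y x) by rewrite /Y (linfB B_lin) XBB opprB.
suff Y0 : forall x, Y x = 0 by move=> x; apply/eqP; rewrite -subr_eq0; apply/eqP/Y0.
apply: (op_eq0_of_contraction_average q01 leC).
  by apply: bounded_sub; apply: bounded_comp.
move=> x; rewrite (linfB Y_lin) (linfZ Y_lin) YB scalerN opprK.
by rewrite [RHS]addrACA addNr addr0.
Qed.

(** * Unitary operators *)

Lemma adjoint_sym V Vs : is_adjoint ip V Vs -> is_adjoint ip Vs V.
Proof. by move=> V_adj x y; rewrite ip_conj -V_adj -ip_conj. Qed.

Lemma adjoint_linear V Vs : is_adjoint ip V Vs -> linear Vs.
Proof. by move=> V_adj a x y; apply: ip_injr => z; rewrite -V_adj !ipDr !ipZr -!V_adj. Qed.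

Lemma linear_scale (a : R[i]) : linear (fun x : H => a *: x).
Proof. by move=> b x y; rewrite scalerDr !scalerA mulrC. Qed.

Lemma bounded_below_comp (F G : H -> H) :
  bounded_below F -> bounded_below G -> bounded_below (fun x => F (G x)).
Proof.
move=> [KF [KF_gt0 leF]] [KG [KG_gt0 leG]]; exists (KG * KF); split; first exact: mulr_gt0.
by move=> x; have := leG x; have := leF (G x); have := normsq_ge0 (F (G x)); nra.
Qed.

Lemma normalize_vector x : 0 < normsq x -> exists y, normsq y = 1 /\
  forall F, linear F -> Re (ip (F y) y) = Re (ip (F x) x) / normsq x.
Proof.
move=> x_gt0; pose r := (Num.sqrt (normsq x))^-1.
have r2 : r ^+ 2 = (normsq x)^-1 by rewrite exprVn sqr_sqrtr // ltW.
exists (r%:C *: x); split; first by rewrite normsqZ_real r2 mulVf ?gt_eqF.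
move=> F F_lin; rewrite (linfZ F_lin) Re_ipZl_real Re_ipZr_real mulrA -expr2 r2.
by rewrite mulrC.
Qed.

Section Unitary.
Variables V Vs : H -> H.
Hypothesis V_adj : is_adjoint ip V Vs.
Hypothesis VsV : forall x, Vs (V x) = x.
Hypothesis VVs : forall x, V (Vs x) = x.

Lemma unitary_linear : linear V.
Proof. exact: adjoint_linear (adjoint_sym V_adj). Qed.

Lemma unitary_isometry x : normsq (V x) = normsq x.
Proof. by rewrite /normsq V_adj VsV. Qed.

Lemma unitary_numrange_inf : (exists x : H, x != 0) ->
  exists m : R, [/\ -1 <= m, forall x, m * normsq x <= Re (ip (V x) x) &
    forall e : R, 0 < e -> exists2 x, normsq x = 1 & Re (ip (V x) x) < m + e].
Proof.
move=> [x0 x0_neq0]; pose E r := exists2 x, normsq x = 1 & r = Re (ip (V x) x).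
have E_ge x : normsq x = 1 -> -1 <= Re (ip (V x) x).
  by move=> x1; have := Re_ip_ge (V x) x; rewrite unitary_isometry x1; lra.
have E_lb : has_lbound E by exists (-1) => _ [x x1 ->]; apply: E_ge.
have E_nonempty : nonempty E.
  have x0_gt0 : 0 < normsq x0.
    by rewrite lt_neqAle normsq_ge0 andbT eq_sym; apply: contra x0_neq0 => /eqP/normsq_eq0->.
  by have [y [y1 _]] := normalize_vector x0_gt0; exists (Re (ip (V y) y)), y.
exists (inf E); split.
- by apply: lb_le_inf => // _ [x x1 ->]; apply: E_ge.
- move=> x; have [x0_eq|x_gt0] := eqVneq (normsq x) 0.
    by rewrite (normsq_eq0 x0_eq) (linf0 unitary_linear) normsq0 ip0r mulr0.
  have {}x_gt0 : 0 < normsq x by rewrite lt_neqAle eq_sym x_gt0 normsq_ge0.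
  have [y [y1 Vy]] := normalize_vector x_gt0.
  have : inf E <= Re (ip (V y) y) by apply: ge_inf E_lb _ _; exists y.
  by rewrite Vy ?ler_pdivlMr //; apply: unitary_linear.
- move=> e e_gt0; have [_ [x x1 ->] lt_e] := inf_adherent e_gt0 (conj E_nonempty E_lb).
  by exists x.
Qed.

(* Let [m] be the infimum of [Re <V x, x>] on the unit sphere.  If [m <= 0], pick [l] on the
   unit circle with [Re l = m]: then [(V - l)(V - l^* ) = V (V + V^* - 2m)] makes the positive
   operator [V + V^* - 2m] bounded below, hence coercive, contradicting minimality of [m]. *)
Lemma unitary_coercive :
  (forall l : R[i], l * l^* = 1 -> Re l <= 0 -> bounded_below (fun x => V x - l *: x)) ->
  coercive V.
Proof.
move=> below; have V_lin := unitary_linear.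
have [[x0 x0_neq0]|H0] := classic (exists x : H, x != 0); last first.
  exists 1; split=> // x.
  have -> : x = 0 by case: (x =P 0) => // /eqP x_neq0; case: H0; exists x.
  by rewrite (linf0 V_lin) normsq0 ip0r mulr0.
have [m [m_ge m_le inf_m]] := unitary_numrange_inf (ex_intro _ x0 x0_neq0).
have [m_gt0|m_le0] := ltP 0 m; first by exists m.
set s := Num.sqrt (1 - m ^+ 2).
have s2 : s ^+ 2 = 1 - m ^+ 2 by rewrite sqr_sqrtr //; nra.
pose l := m +i* s.
have ll : l * l^* = 1.
  by apply/eqP; rewrite eq_complex /=; apply/andP; split; apply/eqP; nra.
have lDl : l + l^* = (2 * m)%:C.
  by apply/eqP; rewrite eq_complex /=; apply/andP; split; apply/eqP; ring.
pose B x := V x + Vs x - (2 * m)%:C *: x.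
have ipB x : ip (B x) x = (2 * Re (ip (V x) x) - 2 * m * normsq x)%:C.
  rewrite /B ipBl ipDl ipZl (adjoint_sym V_adj) [ip x (V x)]ip_conj ip_normsq.
  case: (ip (V x) x) => a b.
  by apply/eqP; rewrite eq_complex /=; apply/andP; split; apply/eqP; ring.
have B_psd : psd B.
  split=> [|x]; last by rewrite ipB ler0c; have := m_le x; lra.
  apply: linear_sub; last exact: linear_scale.
  by apply: linear_add; last exact: adjoint_linear V_adj.
have B_bnd : op_bounded B.
  apply: bounded_sub.
    apply: bounded_add; apply: isometry_bounded => x; first exact: unitary_isometry.
    by rewrite /normsq (adjoint_sym V_adj) VVs.
  exists ((2 * m) ^+ 2 + 1); split=> [|x]; first nra.
  by rewrite normsqZ_real; have := normsq_ge0 x; nra.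
have VB x : V (B x) = V (V x - l^* *: x) - l *: (V x - l^* *: x).
  rewrite /B !(linfB V_lin) !(linfD V_lin) !(linfZ V_lin) VVs scalerBr scalerA ll.
  rewrite scale1r -lDl scalerDl opprD opprB.
  by rewrite [RHS]addrACA [X in _ = _ + X]addrC.
have B_below : bounded_below B.
  have ll' : l^* * (l^*)^* = 1 by rewrite conjCK mulrC.
  have [K [K_gt0 leK]] := bounded_below_comp (below _ ll m_le0) (below _ ll' m_le0).
  by exists K; split=> // x; have := leK x; rewrite -VB unitary_isometry.
have [c [c_gt0 leB]] := psd_coercive B_psd B_bnd B_below.
have [y y1 lt_y] := inf_m (c / 2) (divr_gt0 c_gt0 (ltr0Sn _ 1)).
by have := leB y; rewrite ipB y1 /=; lra.
Qed.

Lemma unitary_commute_of_commute_sq X : coercive V -> linear X -> op_bounded X ->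
  is_adjoint ip X X -> (forall x, X (V (V x)) = V (V (X x))) ->
  forall x, X (V x) = V (X x).
Proof.
move=> [c [c_gt0 leV]] X_lin X_bnd X_adj XVV.
have V_lin := unitary_linear; have Vs_lin := adjoint_linear V_adj.
have XVsVs x : X (Vs (Vs x)) = Vs (Vs (X x)).
  by apply: ip_injr => z; rewrite -X_adj -!V_adj -XVV X_adj.
pose B x := V x + Vs x; pose D x := V x - Vs x.
have B_lin : linear B by apply: linear_add.
have ipB x : ip (B x) x = (2 * Re (ip (V x) x))%:C.
  rewrite /B ipDl (adjoint_sym V_adj) [ip x (V x)]ip_conj.
  case: (ip (V x) x) => a b.
  by apply/eqP; rewrite eq_complex /=; apply/andP; split; apply/eqP; ring.
have B_psd : psd B.
  by split=> // x; rewrite ipB ler0c; have := leV x; have := normsq_ge0 x; nra.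
have B_coer : coercive B.
  by exists (2 * c); split=> [|x]; [lra|rewrite ipB /=; have := leV x; lra].
have B_bnd : op_bounded B.
  apply: bounded_add; apply: isometry_bounded => x; first exact: unitary_isometry.
  by rewrite /normsq (adjoint_sym V_adj) VVs.
have BB x : B (B x) = (V (V x) + Vs (Vs x)) + (x + x).
  by rewrite /B (linfD V_lin) (linfD Vs_lin) VVs VsV (addrC x) addrACA.
have XB := commute_sqrt B_psd B_bnd B_coer X_lin X_bnd.
have {}XB x : X (B x) = B (X x) by apply: XB => y; rewrite !BB !(linfD X_lin) XVV XVsVs.
have BD x : B (D x) = V (V x) - Vs (Vs x).
  by rewrite /B /D (linfB V_lin) (linfB Vs_lin) VVs VsV addrA subrK.
have XD x : X (D x) = D (X x).
  by apply: (coercive_inj B_lin B_coer); rewrite -XB BD (linfB X_lin) XVV XVsVs -BD.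
move=> x; apply: (scalerI (a := 2%:R)); first by rewrite pnatr_eq0.
have VBD y : 2%:R *: V y = B y + D y by rewrite scaler_nat mulr2n /B /D addrACA subrr addr0.
by rewrite -(linfZ X_lin) !VBD (linfD X_lin) XB XD.
Qed.

End Unitary.

Lemma unitary_scale U Us (w : R[i]) : is_adjoint ip U Us ->
  (forall x, Us (U x) = x) -> (forall x, U (Us x) = x) -> w * w^* = 1 ->
  [/\ is_adjoint ip (fun x => w *: U x) (fun x => w^* *: Us x),
      forall x, w^* *: Us (w *: U x) = x & forall x, w *: U (w^* *: Us x) = x].
Proof.
move=> U_adj UsU UUs ww; have U_lin := unitary_linear U_adj.
have Us_lin := adjoint_linear U_adj.
split=> x; last 2 first.
- by rewrite (linfZ Us_lin) UsU scalerA mulrC ww scale1r.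
- by rewrite (linfZ U_lin) UUs scalerA ww scale1r.
by move=> y; rewrite ipZl ipZr conjCK U_adj.
Qed.

(* With [w = -i e^{-i alpha}], the arc [alpha < t < alpha + pi] is rotated onto the open
   right half of the unit circle: [Re (w e^{it}) = sin (t - alpha)]. *)
Lemma arc_spectrum_rotate_coercive U Us : is_adjoint ip U Us ->
  (forall x, Us (U x) = x) -> (forall x, U (Us x) = x) ->
  (exists alpha : R, forall z, spectrum ip U z ->
     exists t : R, alpha < t < alpha + pi /\ z = cos t +i* sin t) ->
  exists w : R[i], w * w^* = 1 /\ coercive (fun x => w *: U x).
Proof.
move=> U_adj UsU UUs [alpha arc]; pose w := - sin alpha +i* - cos alpha.
have ww : w * w^* = 1.
  by apply/eqP; rewrite eq_complex /= -(cos2Dsin2 alpha); apply/andP; split; apply/eqP; ring.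
exists w; split=> //; have [V_adj VsV VVs] := unitary_scale U_adj UsU UUs ww.
apply: (unitary_coercive V_adj VsV VVs) => l ll l_le0.
have l_wz : l = w * (w^* * l) by rewrite mulrA ww mul1r.
have [z_spec|] := classic (spectrum ip U (w^* * l)).
  have [t [/andP[lt_t t_lt] z_t]] := arc _ z_spec.
  have : 0 < sin (t - alpha) by apply: sin_gt0_pi; lra.
  by move: l_le0; rewrite l_wz z_t sinB /=; lra.
move/NNPP/invertible_bounded_below => [K [K_gt0 leK]].
exists K; split=> // x; have := leK x.
by rewrite {2}l_wz -scalerA -scalerBr normsqZ_unit.
Qed.

(** * Polar decomposition and the Aluthge transform *)

Section PolarDecomposition.
Variables T A U Us S : H -> H.
Hypothesis T_inv : op_invertible ip T.
Hypothesis A_pos : is_positive_op ip A.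
Hypothesis U_adj : is_adjoint ip U Us.
Hypothesis UsU : forall x, Us (U x) = x.
Hypothesis UUs : forall x, U (Us x) = x.
Hypothesis TUA : forall x, T x = U (A x).
Hypothesis S_pos : is_positive_op ip S.
Hypothesis SS : forall x, S (S x) = A x.

Lemma abs_bounded_below : bounded_below A.
Proof.
have [K [K_gt0 leK]] := invertible_bounded_below T_inv.
by exists K; split=> // x; have := leK x; rewrite TUA (unitary_isometry U_adj UsU).
Qed.

Lemma abs_surj y : exists x, A x = y.
Proof.
have [Ti [_ _ TTi]] := T_inv; exists (Ti (U y)).
by have := UsU (A (Ti (U y))); rewrite -TUA TTi UsU => /esym.
Qed.

Lemma abs_coercive : coercive A.
Proof.
by have [A_psd A_bnd] := positive_psd A_pos; apply: psd_coercive abs_bounded_below.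
Qed.

Lemma sqrt_coercive : coercive S.
Proof.
have [S_psd [KS [KS_gt0 leS]]] := positive_psd S_pos.
apply: psd_coercive => //; first by exists KS.
have [K [K_gt0 leK]] := abs_bounded_below; exists (K * KS); split; first exact: mulr_gt0.
move=> x; have := leK x; have := leS (S x); rewrite SS.
by have := normsq_ge0 (S x); nra.
Qed.

Lemma polar_adjoint : is_adjoint ip T (fun y => A (Us y)).
Proof. by move=> x y; rewrite TUA U_adj (psd_selfadj (positive_psd A_pos).1). Qed.

Lemma aluthge_normal_of_normal : is_normal_op ip T -> is_normal_op ip (aluthge S U).
Proof.
case=> N [N_adj NT]; have [A_psd A_bnd] := positive_psd A_pos.
have [S_psd S_bnd] := positive_psd S_pos.
have U_lin := unitary_linear U_adj.
have U_bnd := isometry_bounded (unitary_isometry U_adj UsU).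
have N_A y : N y = A (Us y) by apply: ip_injr => z; rewrite -N_adj polar_adjoint.
have UAA x : U (A (A x)) = A (A (U x)).
  by have := NT (U x); rewrite !N_A !TUA UsU => ->; rewrite UsU.
have UA := commute_sqrt A_psd A_bnd abs_coercive U_lin U_bnd UAA.
have US := commute_sqrt S_psd S_bnd sqrt_coercive U_lin U_bnd.
have {}US x : U (S x) = S (U x) by apply: US => y; rewrite !SS UA.
have aluthgeT x : aluthge S U x = T x by rewrite /aluthge -US SS TUA.
exists N; split=> [x y|x]; first by rewrite aluthgeT N_adj.
by rewrite !aluthgeT NT.
Qed.

Lemma aluthge_adjoint : is_adjoint ip (aluthge S U) (aluthge S Us).
Proof.
have S_adj := psd_selfadj (positive_psd S_pos).1.
by move=> x y; rewrite /aluthge S_adj U_adj S_adj.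
Qed.

Hypothesis U_arc : exists alpha : R, forall z, spectrum ip U z ->
  exists t : R, alpha < t < alpha + pi /\ z = cos t +i* sin t.

Lemma normal_of_aluthge_normal : is_normal_op ip (aluthge S U) -> is_normal_op ip T.
Proof.
case=> N [N_adj NC]; have [A_psd A_bnd] := positive_psd A_pos.
have [[S_lin _] _] := positive_psd S_pos.
have U_lin := unitary_linear U_adj.
have N_eq y : N y = aluthge S Us y by apply: ip_injr => z; rewrite -N_adj aluthge_adjoint.
have UAUs w : U (A (Us w)) = Us (A (U w)).
  have [x <-] := abs_surj w; apply: (coercive_inj S_lin sqrt_coercive).
  by have := NC (S x); rewrite !N_eq /aluthge !SS.
have UUA x : A (U (U x)) = U (U (A x)).
  by have := UAUs (U x); rewrite UsU => ->; rewrite UUs.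
have [w [ww V_coer]] := arc_spectrum_rotate_coercive U_adj UsU UUs U_arc.
have [V_adj VsV VVs] := unitary_scale U_adj UsU UUs ww.
have AV := unitary_commute_of_commute_sq V_adj VsV VVs V_coer A_psd.1 A_bnd
  (psd_selfadj A_psd).
have w_neq0 : w != 0 by apply: contra_eq_neq ww => ->; rewrite mul0r eq_sym oner_neq0.
have AU x : A (U x) = U (A x).
  apply: (scalerI w_neq0).
  rewrite -(linfZ A_psd.1) AV // => y.
  by rewrite !(linfZ U_lin) !(linfZ A_psd.1) UUA.
exists (fun y => A (Us y)); split; first exact: polar_adjoint.
by move=> x; rewrite !TUA UsU -AU -AU UUs.
Qed.

End PolarDecomposition.

End InnerProduct.

Theorem theorem2p5 (R : realType) (H : lmodType R[i]) (ip : H -> H -> R[i]) :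
  is_complex_hilbert ip ->
  forall T : H -> H, is_bounded_op ip T -> op_invertible ip T ->
  forall A U S : H -> H,
    is_op_abs ip T A ->
    is_unitary_op ip U ->
    (forall x, T x = U (A x)) ->
    (exists alpha : R, forall z : R[i], spectrum ip U z ->
        exists t : R, alpha < t < alpha + pi /\ z = cos t +i* sin t) ->
    is_pos_sqrt ip A S ->
    (is_normal_op ip (aluthge S U) <-> is_normal_op ip T).
Proof.
case=> ipDZl ip_conj ip_ge0 ip_eq0 _ T _ T_inv A U S [_ [_ [A_pos _]]].
move=> [_ [Us [U_adj UsU UUs]]] TUA U_arc [S_pos SS].
split.
- exact: (normal_of_aluthge_normal ipDZl ip_conj ip_ge0 ip_eq0 T_inv A_pos
            U_adj UsU UUs TUA S_pos SS U_arc).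
- exact: (aluthge_normal_of_normal ipDZl ip_conj ip_ge0 ip_eq0 T_inv A_pos
            U_adj UsU TUA S_pos SS).
Qed.
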